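(* Let $(\mathbb E;B,Q;M)$ be a metric double vector bundle with core $Q^*$, and let $D\subseteq\mathbb E$ be a double vector subbundle with sides $B'\subseteq B$, $U\subseteq Q$ and core $K\subseteq Q^*$. Let $\Sigma\colon B\times_MQ\to\mathbb E$ be a linear splitting adapted to $D$ ($\Sigma(B'\times_MU)\subseteq D$) with associated symmetric form $\Lambda$. Then $D$ is maximal isotropic (i.e. $D_b$ is maximal isotropic in the fibre $\mathbb E_b$ of $\mathbb E\to B$ for all $b\in B'$) if and only if $U=K^\circ$ and $\Lambda(u_1,u_2)\in(B')^\circ$ for all $m\in M$ and $u_1,u_2\in U_m$.
   Context: A double vector bundle $(\mathbb E;B,Q;M)$ with core $Q^*$: $\mathbb E$ carries commuting vector bundle structures over $B$ and over $Q$; the core is the intersection of the kernels of the two projections. A linear splitting $\Sigma\colon B\times_MQ\to\mathbb E$ is a double vector bundle embedding inducing the identity on $B$ and $Q$; it yields $\mathbb E\cong B\times_MQ\times_MQ^*$ (additions $(b,q,\tau)+_B(b,q',\tau')=(b,q+q',\tau+\tau')$, $(b,q,\tau)+_Q(b',q,\tau')=(b+b',q,\tau+\tau')$), horizontal lifts $\sigma_Q(q)(b_m)=\Sigma(b_m,q(m))$ and core sections $\tau^\dagger(b_m)=(b_m,0,\tau(m))$. The double vector bundle is metric if $\mathbb E\to B$ has a symmetric fibrewise nondegenerate pairing with $\langle\tau_1^\dagger,\tau_2^\dagger\rangle=0$, $\langle\chi,\tau^\dagger\rangle=q_B^*\langle q,\tau\rangle$ for linear sections $\chi$ over $q$, and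 $\langle\chi_1,\chi_2\rangle$ fibrewise linear on $B$ for linear sections. $\Lambda\colon Q\times_MQ\to B^*$ (symmetric bilinear) is defined by $\langle\sigma_Q(q_1),\sigma_Q(q_2)\rangle=\ell_{\Lambda(q_1,q_2)}$, $\ell_\beta$ the linear function on $B$ of $\beta\in\Gamma(B^* )$; thus $\langle(b,q_1,\tau_1),(b,q_2,\tau_2)\rangle=\langle\Lambda(q_1,q_2),b\rangle+\langle q_1,\tau_2\rangle+\langle q_2,\tau_1\rangle$. An adapted double subbundle with sides $B',U$, core $K$ corresponds to $B'\times_MU\times_MK$. $K^\circ\subseteq Q$, $(B')^\circ\subseteq B^*$ are annihilators. *)

From HB Require Import structures.
From mathcomp Require Import all_boot all_order all_algebra.
From mathcomp Require Import reals.
Set Implicit Arguments. Unset Strict Implicit. Unset Printing Implicit Defensive.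
Import Order.TTheory GRing.Theory Num.Theory.
Local Open Scope ring_scope.

(* Fibres of vector bundles are modelled in coordinates as row vectors;
   the dual of 'rV_n is again 'rV_n with the pairing below. *)
Definition dual_pair (R : ringType) n (u v : 'rV[R]_n) : R := (u *m v^T) 0 0.

Definition in_annih (R : fieldType) m n (A : 'M[R]_(m, n)) (q : 'rV[R]_n) : Prop :=
  forall t : 'rV[R]_n, (t <= A)%MS -> dual_pair q t = 0.

Definition is_subspace (R : ringType) (V : lmodType R) (S : V -> Prop) : Prop :=
  [/\ S 0, (forall x y, S x -> S y -> S (x + y)) & (forall (a : R) x, S x -> S (a *: x))].

Definition isotropic (R : ringType) (V : lmodType R) (beta : V -> V -> R) (S : V -> Prop) :=
  forall x y, S x -> S y -> beta x y = 0.

Definition maximal_isotropic (R : ringType) (V : lmodType R) (beta : V -> V -> R)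
    (S : V -> Prop) : Prop :=
  [/\ is_subspace S, isotropic beta S &
      forall S' : V -> Prop, is_subspace S' -> (forall x, S x -> S' x) ->
        isotropic beta S' -> forall x, S' x -> S x].

(* Fibre E_b of E -> B over b in B_m, identified via the splitting with
   Q_m x Q_m^* ; elements (b,q,tau) with b fixed are pairs (q,tau). *)
Definition fibre_pairing (R : ringType) nB nQ
    (Lam : 'rV[R]_nQ -> 'rV[R]_nQ -> 'rV[R]_nB) (b : 'rV[R]_nB)
    (x y : 'rV[R]_nQ * 'rV[R]_nQ) : R :=
  dual_pair (Lam x.1 y.1) b + dual_pair x.1 y.2 + dual_pair y.1 x.2.

(* Fibre D_b (b in B'_m) of the adapted double subbundle D = B' x_M U x_M K *)
Definition sub_fibre (R : fieldType) nQ (U K : 'M[R]_nQ)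
    (x : 'rV[R]_nQ * 'rV[R]_nQ) : Prop :=
  (x.1 <= U)%MS /\ (x.2 <= K)%MS.

From mathcomp Require Import all_boot all_order all_algebra.
From mathcomp Require Import reals.
Import GRing.Theory.
Set Implicit Arguments. Unset Strict Implicit.
Local Open Scope ring_scope.

(* Over b in B'_m the fibre of D is U_m x K_m inside Q_m x Q_m^*, and the metric
   pairs (q, 0) with (0, t) by <q, t> and (u1, 0) with (u2, 0) by
   <Lambda(u1, u2), b>; so D_b is isotropic iff U is contained in K° and
   Lambda(U, U) annihilates b.  When U = K°, an isotropic S' containing D_b has
   first components annihilating K, hence in U, and after subtracting (q, 0) its
   second components annihilate K°, hence lie in K°° = K.  Conversely, over the
   zero vector of B' the Lambda-term vanishes, so K° x K is isotropic; it
   contains D_0, and maximality of D_0 forces K° to lie in U. *)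

Section Annihilator.
Variable R : fieldType.

Lemma dual_pairC n (x y : 'rV[R]_n) : dual_pair x y = dual_pair y x.
Proof. by rewrite /dual_pair -[x *m _]trmxK trmx_mul trmxK mxE. Qed.

Lemma dual_pair0l n (t : 'rV[R]_n) : dual_pair 0 t = 0.
Proof. by rewrite /dual_pair mul0mx mxE. Qed.

Lemma dual_pair0r n (t : 'rV[R]_n) : dual_pair t 0 = 0.
Proof. by rewrite dual_pairC dual_pair0l. Qed.

Lemma in_annihP m n (K : 'M[R]_(m, n)) u : in_annih K u <-> (u <= kermx K^T)%MS.
Proof.
split=> [uK | /submxP[x ->] t /submxP[y ->]].
  apply/sub_kermxP/rowP => i; have := uK (row i K) (row_sub _ _).
  rewrite dual_pairC /dual_pair -row_mul mxE => uKi.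
  by rewrite -[u *m _]trmxK trmx_mul trmxK mxE uKi mxE.
by rewrite /dual_pair trmx_mul -mulmxA (mulmxA (kermx _)) mulmx_ker mul0mx mulmx0 mxE.
Qed.

Lemma sub_annih_annih n (K : 'M[R]_n) t :
  (forall u, in_annih K u -> dual_pair u t = 0) -> (t <= K)%MS.
Proof.
move=> tKoo; set Ko := kermx K^T.
have tKoo' : (t <= kermx Ko^T)%MS.
  apply/sub_kermxP; rewrite -[t *m _]trmxK trmx_mul trmxK.
  apply/matrixP => i j; rewrite ord1 [RHS]mxE.
  have := tKoo (row j Ko) (proj2 (in_annihP _ _) (row_sub _ _)).
  by rewrite /dual_pair -row_mul !mxE.
have KKoo : (K <= kermx Ko^T)%MS.
  by apply/sub_kermxP; rewrite -[K *m _]trmxK trmx_mul trmxK mulmx_ker trmx0.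
suff Koo_sub : (kermx Ko^T <= K)%MS by apply: submx_trans tKoo' Koo_sub.
rewrite -(mxrank_leqif_sup KKoo).2 mxrank_ker mxrank_tr /Ko mxrank_ker mxrank_tr.
by rewrite subKn ?rank_leq_col.
Qed.

End Annihilator.

Section Fibre.
Variables (R : fieldType) (nB nQ : nat).
Variable Lam : 'rV[R]_nQ -> 'rV[R]_nQ -> 'rV[R]_nB.
Hypothesis Lam_linl : forall (a : R) x y z, Lam (a *: x + y) z = a *: Lam x z + Lam y z.
Hypothesis Lam_sym : forall x y, Lam x y = Lam y x.
Variables (U K : 'M[R]_nQ).

Lemma Lam0l z : Lam 0 z = 0.
Proof.
have := Lam_linl 1 0 0 z; rewrite scaler0 addr0 scale1r -{1}[Lam 0 z]add0r.
by move/addIr.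
Qed.

Lemma Lam0r z : Lam z 0 = 0.
Proof. by rewrite Lam_sym Lam0l. Qed.

Lemma sub_fibre_subspace : is_subspace (sub_fibre U K).
Proof.
split=> [|[x1 x2] [y1 y2] [/= x1U x2K] [/= y1U y2K] | a [x1 x2] [/= x1U x2K]].
- by split; apply: sub0mx.
- by split; apply: addmx_sub.
- by split; apply: scalemx_sub.
Qed.

Lemma fibre_pairing_side_core b q t : fibre_pairing Lam b (q, 0) (0, t) = dual_pair q t.
Proof. by rewrite /fibre_pairing /= Lam0r !dual_pair0l add0r addr0. Qed.

Lemma fibre_pairing_sides b u1 u2 :
  fibre_pairing Lam b (u1, 0) (u2, 0) = dual_pair (Lam u1 u2) b.
Proof. by rewrite /fibre_pairing /= !dual_pair0r !addr0. Qed.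

Lemma isotropic_sub_fibreP b :
  isotropic (fibre_pairing Lam b) (sub_fibre U K) <->
  (forall q, (q <= U)%MS -> in_annih K q) /\
  (forall u1 u2, (u1 <= U)%MS -> (u2 <= U)%MS -> dual_pair (Lam u1 u2) b = 0).
Proof.
split=> [iso | [UKo LamU] [x1 x2] [y1 y2] [/= x1U x2K] [/= y1U y2K]].
  split=> [q qU t tK | u1 u2 u1U u2U].
    by rewrite -(fibre_pairing_side_core b); apply: iso; split=> //; apply: sub0mx.
  by rewrite -fibre_pairing_sides; apply: iso; split=> //; apply: sub0mx.
by rewrite /fibre_pairing /= LamU // (UKo x1) // (UKo y1) // !addr0.
Qed.

Lemma maximal_isotropic_sub_fibre b :
  (forall q, (q <= U)%MS <-> in_annih K q) ->
  isotropic (fibre_pairing Lam b) (sub_fibre U K) ->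
  maximal_isotropic (fibre_pairing Lam b) (sub_fibre U K).
Proof.
move=> UKo iso; split=> //; first exact: sub_fibre_subspace.
move=> S' [_ S'D S'Z] DS' isoS' [q t] S'qt.
have S'side u : (u <= U)%MS -> S' (u, 0).
  by move=> uU; apply: DS'; split=> //; apply: sub0mx.
have qU : (q <= U)%MS.
  apply/UKo => k kK; have := isoS' _ _ S'qt (DS' (0, k) (conj (sub0mx _ _) kK)).
  by rewrite /fibre_pairing /= Lam0r !dual_pair0l add0r addr0.
have S'core : S' (0, t).
  suff <- : (q, t) + -1 *: (q, 0) = (0, t) by apply/S'D/S'Z/S'side.
  by rewrite scaleN1r; congr pair; rewrite /= ?subrr ?oppr0 ?addr0.
split=> //=; apply: sub_annih_annih => u /UKo uU.
have := isoS' _ _ S'core (S'side u uU).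
by rewrite /fibre_pairing /= Lam0l !dual_pair0l !add0r.
Qed.

Lemma annih_sub_maximal_sub_fibre0 :
  maximal_isotropic (fibre_pairing Lam 0) (sub_fibre U K) ->
  forall q, in_annih K q -> (q <= U)%MS.
Proof.
case=> _ /isotropic_sub_fibreP[UKo _] maxD q qKo.
pose S' (x : 'rV[R]_nQ * 'rV[R]_nQ) := in_annih K x.1 /\ (x.2 <= K)%MS.
have S'sub : is_subspace S'.
  split=> [|x y [/in_annihP x1Ko x2K] [/in_annihP y1Ko y2K] | a x [/in_annihP x1Ko x2K]].
  - by split; [apply/in_annihP/sub0mx | apply: sub0mx].
  - by split; [apply/in_annihP/addmx_sub | apply: addmx_sub].
  - by split; [apply/in_annihP/scalemx_sub | apply: scalemx_sub].
have DS' x : sub_fibre U K x -> S' x by case=> x1U x2K; split=> //; apply: UKo.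
have isoS' : isotropic (fibre_pairing Lam 0) S'.
  move=> [x1 x2] [y1 y2] [/= x1Ko x2K] [/= y1Ko y2K].
  by rewrite /fibre_pairing /= dual_pair0r x1Ko // y1Ko // !addr0.
by have [] := maxD S' S'sub DS' isoS' (q, 0) (conj qKo (sub0mx _ _)).
Qed.

End Fibre.

Theorem proposition5p2 (R : realType) (M : Type) (nB nQ : M -> nat)
    (B' : forall m, 'M[R]_(nB m)) (U K : forall m, 'M[R]_(nQ m))
    (Lam : forall m, 'rV[R]_(nQ m) -> 'rV[R]_(nQ m) -> 'rV[R]_(nB m))
    (Lam_linl : forall m (a : R) x y z, Lam m (a *: x + y) z = a *: Lam m x z + Lam m y z)
    (Lam_sym : forall m x y, Lam m x y = Lam m y x) :
  (forall m (b : 'rV[R]_(nB m)), (b <= B' m)%MS ->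
     maximal_isotropic (fibre_pairing (Lam m) b) (sub_fibre (U m) (K m)))
  <->
  (forall m,
     (forall q : 'rV[R]_(nQ m), (q <= U m)%MS <-> in_annih (K m) q) /\
     (forall u1 u2 : 'rV[R]_(nQ m), (u1 <= U m)%MS -> (u2 <= U m)%MS ->
        in_annih (B' m) (Lam m u1 u2))).
Proof.
have isoP m b := isotropic_sub_fibreP (Lam_linl m) (Lam_sym m) (U m) (K m) b.
split=> [maxD m | cond m b bB'].
  have maxD0 := maxD m 0 (sub0mx _ _).
  have KoU := annih_sub_maximal_sub_fibre0 (Lam_linl m) (Lam_sym m) maxD0.
  have [_ /isoP[UKo _] _] := maxD0.
  split=> [q | u1 u2 u1U u2U b bB'].
    by split; [apply: UKo | apply: KoU].
  by have [_ /isoP[_ ->]] := maxD m b bB'.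
have [UKo LamB'o] := cond m.
have isoD : isotropic (fibre_pairing (Lam m) b) (sub_fibre (U m) (K m)).
  by apply/isoP; split=> [q /UKo | u1 u2 u1U u2U]; last exact: LamB'o.
exact: (maximal_isotropic_sub_fibre (Lam_linl m) (Lam_sym m) UKo isoD).
Qed.
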